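(* Let $0\le\alpha\le\tfrac12$, let $X$ be uniformly distributed on $\{-1,1\}^n$, and let $Y_i=X_iZ_i$ for $i=1,\dots,n$, where $Z_1,\dots,Z_n$ are i.i.d., independent of $X$, with $\Pr(Z_i=-1)=\alpha$, $\Pr(Z_i=1)=1-\alpha$. For a Boolean function $f:\{-1,1\}^n\to\{-1,1\}$ and $y\in\{-1,1\}^n$ let $P_y^f=\Pr(f(X)=-1\mid Y=y)$. Let $k\ge1$ be an integer satisfying $(1-2\alpha)\sqrt{2k-1}\le 1$. Then for any balanced Boolean function $f:\{-1,1\}^n\to\{-1,1\}$ (i.e., $\Pr(f(X)=-1)=\tfrac12$), \[ \mathbb{E}_Y\left((1-2P_Y^{f})^{2k}\right)\le (2k-1)^{k}(1-2\alpha)^{2k}. \] *)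

From mathcomp Require Import all_boot all_order all_algebra.
From mathcomp Require Import reals.
Set Implicit Arguments. Unset Strict Implicit. Unset Printing Implicit Defensive.
Import Order.TTheory GRing.Theory Num.Theory.
Local Open Scope ring_scope.

(* Encoding of {-1,1}: a boolean b stands for the sign [sgnb b]
   (true <-> -1, false <-> +1).  Under this encoding the product of two
   signs corresponds to [xorb]:  sgnb (xorb a b) = sgnb a * sgnb b. *)
Definition sgnb {R : pzRingType} (b : bool) : R := if b then -1 else 1.

Definition cube (n : nat) := {ffun 'I_n -> bool}.

Section Model.
Variables (R : realType) (n : nat) (alpha : R).

Definition pZ (b : bool) : R := if b then alpha else 1 - alpha.

Definition prXZ (x z : cube n) : R := (2 ^+ n)^-1 * \prod_(i < n) pZ (z i).

Definition Yof (x z : cube n) : cube n := [ffun i => xorb (x i) (z i)].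

Definition PrY (y : cube n) : R :=
  \sum_(x : cube n) \sum_(z : cube n | Yof x z == y) prXZ x z.

(* Pr(f(X) = -1), for f : {-1,1}^n -> {-1,1} encoded as f x = true <-> f(x) = -1. *)
Definition Pr_f_neg (f : cube n -> bool) : R :=
  \sum_(x : cube n | f x) \sum_(z : cube n) prXZ x z.

Definition Pcond (f : cube n -> bool) (y : cube n) : R :=
  (\sum_(x : cube n | f x) \sum_(z : cube n | Yof x z == y) prXZ x z) / PrY y.

Definition EY (g : cube n -> R) : R := \sum_(y : cube n) PrY y * g y.

Definition balanced (f : cube n -> bool) : Prop := Pr_f_neg f = 2^-1.

End Model.

From mathcomp Require Import all_boot all_order all_algebra.
From mathcomp Require Import reals.
From mathcomp Require Import zify ring lra.
Import Order.TTheory GRing.Theory Num.Theory.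
Set Implicit Arguments. Unset Strict Implicit. Unset Printing Implicit Defensive.

(* Write rho = 1 - 2 alpha and g = sgnb \o f.  Since Y is uniform and Z is
   independent of X, given Y = y the input X is distributed as y Z; hence
   1 - 2 P_y^f = E[g(y Z)] = (T g)(y) for the noise operator T, and the
   left-hand side is the uniform 2k-th moment of T g.
   With c = (2k-1) rho^2 <= 1 and Q_c(h) = (1 - c) E[h]^2 + c E[h^2], one has
   E[(T h)^(2k)] <= Q_c(h)^k, by induction on n: splitting off one coordinate,
   T h = A +- rho B where A, B are the images under T of the average and the
   half-difference of h along that coordinate; the two-point inequality
   ((a + x)^(2k) + (a - x)^(2k)) / 2 <= (a^2 + (2k-1) x^2)^k, Minkowski's
   inequality in L^k and the induction hypothesis bound the moment by
   (Q_c(avg) + c Q_c(diff))^k <= Q_c(h)^k.  For balanced f, E[g] = 0 and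
   E[g^2] = 1, so Q_c(g) = c. *)

(* Going from 2j to 2j + 2 multiplies the left-hand side by
   (2k - 2j)(2k - 2j - 1) / ((2j + 1)(2j + 2)) and the right-hand side by
   (2k - 2j)(2k - 1) / (2j + 2), and 2k - 2j - 1 <= (2k - 1)(2j + 1). *)
Lemma bin_double_le k j : 'C(2 * k, 2 * j) <= 'C(k, j) * (2 * k).-1 ^ j.
Proof.
elim: j => [|j IH]; first by rewrite !bin0.
have e1 := mul_bin_left (2 * k) (2 * j).
have e2 := mul_bin_left (2 * k) (2 * j).+1.
have e3 := mul_bin_left k j.
rewrite mulnS expnS.
set X := 'C(2 * k, 2 * j) in IH e1 *; set X1 := 'C(2 * k, (2 * j).+1) in e1 e2.
set X2 := 'C(2 * k, (2 * j).+2) in e2 *.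
set Y := 'C(k, j) in IH e3 *; set Y1 := 'C(k, j.+1) in e3 *.
set P := (2 * k).-1 ^ j in IH *.
rewrite -(@leq_pmul2r ((2 * j).+1 * (2 * j).+2)) //.
have -> : X2 * ((2 * j).+1 * (2 * j).+2) = X * (2 * (k - j)) * (2 * k - (2 * j).+1).
  rewrite mulnC -mulnA e2 mulnCA e1; nia.
have -> : Y1 * ((2 * k).-1 * P) * ((2 * j).+1 * (2 * j).+2)
          = Y * P * (2 * (k - j)) * ((2 * k).-1 * (2 * j).+1).
  have -> : (2 * j).+2 = 2 * j.+1 by lia.
  transitivity (Y1 * j.+1 * P * (2 * ((2 * k).-1 * (2 * j).+1))); first by nia.
  rewrite mulnC in e3; rewrite e3; nia.
by rewrite leq_mul ?leq_mul //; nia.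
Qed.

Local Open Scope ring_scope.

Lemma sum_ord_even_odd (V : zmodType) (F : nat -> V) k :
  \sum_(i < (2 * k).+1) F i
    = \sum_(j < k.+1) F (2 * j)%N + \sum_(j < k) F (2 * j).+1%N.
Proof.
elim: k => [|k IH]; first by rewrite !big_ord_recr !big_ord0 /= !add0r addr0.
rewrite mulnS [LHS]big_ord_recr [in LHS]big_ord_recr /= IH -mulnS.
rewrite [\sum_(j < k.+2) _]big_ord_recr [\sum_(j < k.+1) F (2 * j).+1%N]big_ord_recr /=.
by rewrite -!addrA; congr (_ + _); rewrite addrA addrC.
Qed.

Lemma two_point_moment_le (R : realFieldType) (a x : R) k :
  ((a + x) ^+ (2 * k) + (a - x) ^+ (2 * k)) / 2
    <= (a ^+ 2 + ((2 * k).-1)%:R * x ^+ 2) ^+ k.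
Proof.
rewrite !exprDn -big_split /=.
rewrite (@sum_ord_even_odd _ (fun i : nat => a ^+ (2 * k - i) * x ^+ i *+ 'C(2 * k, i)
  + a ^+ (2 * k - i) * (- x) ^+ i *+ 'C(2 * k, i))).
rewrite [\sum_(j < k) _]big1 ?addr0; last first.
  move=> j _ /=; rewrite !exprSr !exprM sqrrN !mulrN.
  by rewrite -mulrnDl subrr mul0rn.
rewrite mulr_suml; apply: ler_sum => j _.
have halve (t : R) : (t + t) / 2 = t by lra.
rewrite !exprM sqrrN halve -mulnBr exprM [(_ * x ^+ 2) ^+ j]exprMn -natrX.
rewrite -[_ *+ 'C(2 * k, _)]mulr_natr -[_ *+ 'C(k, _)]mulr_natr.
set A := a ^+ 2 ^+ (k - j); set X := x ^+ 2 ^+ j.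
have -> : A * (((2 * k).-1 ^ j)%:R * X) * 'C(k, j)%:R
          = A * X * (((2 * k).-1 ^ j)%:R * 'C(k, j)%:R) by ring.
apply: ler_wpM2l; first by rewrite mulr_ge0 // exprn_ge0 // sqr_ge0.
by rewrite -natrM ler_nat [X in (_ <= X)%N]mulnC bin_double_le.
Qed.

Lemma weighted_AGM2 (R : realFieldType) (u v : R) p j : 0 <= u -> 0 <= v ->
  (p + j)%:R * (u ^+ p * v ^+ j) <= p%:R * u ^+ (p + j) + j%:R * v ^+ (p + j).
Proof.
move=> u0 v0; have [/eqP|k_gt0] := posnP (p + j).
  by rewrite addn_eq0 => /andP[/eqP-> /eqP->]; rewrite !mul0r addr0.
pose E (i : 'I_(p + j)) := if (i < p)%N then u ^+ (p + j) else v ^+ (p + j).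
have E_ge0 : {in predT, forall i, 0 <= E i}.
  by move=> i _; rewrite /E; case: ifP; rewrite exprn_ge0.
have bigE x (op : Monoid.com_law x) : \big[op/x]_(i in predT) E i
    = op (\big[op/x]_(i < p) u ^+ (p + j)) (\big[op/x]_(i < j) v ^+ (p + j)).
  rewrite big_mkcond /= big_split_ord /=; congr (op _ _); apply: eq_bigr => i _.
    by rewrite /E /= ltn_ord.
  by rewrite /E /= ltnNge leq_addr.
have := (leif_AGM E_ge0).1.
rewrite cardT size_enum_ord !bigE !prodr_const !sumr_const !card_ord.
move=> /= AGM; rewrite -ler_pdivlMl ?ltr0n // [_^-1 * _]mulrC.
rewrite -(ler_pXn2r k_gt0) ?nnegrE.
- by rewrite exprMn -!exprM (mulnC p) (mulnC j) !exprM !mulr_natl; exact: AGM.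
- by rewrite mulr_ge0 // exprn_ge0.
by rewrite divr_ge0 // addr_ge0 // mulr_ge0 // exprn_ge0.
Qed.

Section WeightedMoments.
Variables (R : realFieldType) (T : finType) (mu : T -> R).
Hypothesis mu_ge0 : forall t, 0 <= mu t.

Lemma weighted_sum_divr (F : T -> R) c :
  \sum_t mu t * (F t / c) = (\sum_t mu t * F t) / c.
Proof. by rewrite mulr_suml; apply: eq_bigr => t _; rewrite mulrA. Qed.

Lemma mixed_moment_le1 (U V : T -> R) p j :
  (forall t, 0 <= U t) -> (forall t, 0 <= V t) ->
  \sum_t mu t * U t ^+ (p + j) <= 1 -> \sum_t mu t * V t ^+ (p + j) <= 1 ->
  \sum_t mu t * (U t ^+ p * V t ^+ j) <= 1.
Proof.
move=> U_ge0 V_ge0 U_le1 V_le1; have [/eqP|k_gt0] := posnP (p + j).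
  rewrite addn_eq0 => /andP[/eqP p0 /eqP j0]; rewrite p0 j0 in U_le1 *.
  by under eq_bigr do rewrite mulr1.
rewrite -(@ler_pM2l _ (p + j)%:R) ?ltr0n // mulr1 mulr_sumr.
apply: le_trans (_ : \sum_t (p%:R * (mu t * U t ^+ (p + j))
                             + j%:R * (mu t * V t ^+ (p + j))) <= _).
  apply: ler_sum => t _; rewrite mulrCA [p%:R * _]mulrCA [j%:R * _]mulrCA -mulrDr.
  by rewrite ler_wpM2l // weighted_AGM2.
rewrite big_split /= -!mulr_sumr natrD.
by rewrite lerD // -[X in _ <= X]mulr1 ler_wpM2l.
Qed.

Lemma mixed_moment_eq0 (U V : T -> R) p j : (forall t, 0 <= U t) ->
  \sum_t mu t * U t ^+ (p.+1 + j) <= 0 -> \sum_t mu t * (U t ^+ p.+1 * V t ^+ j) = 0.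
Proof.
move=> U_ge0 U_le0; apply: big1 => t _.
have /eqP : mu t * U t ^+ (p.+1 + j) = 0.
  apply/eqP; rewrite eq_le mulr_ge0 ?exprn_ge0 // andbT.
  apply: le_trans U_le0; rewrite (bigD1 t) //= lerDl.
  by apply: sumr_ge0 => s _; rewrite mulr_ge0 ?exprn_ge0.
rewrite mulf_eq0 expf_eq0 /= => /orP[/eqP->|/eqP->]; first by rewrite mul0r.
by rewrite expr0n mul0r mulr0.
Qed.

Lemma mixed_moment_le (U V : T -> R) a b p j :
  (forall t, 0 <= U t) -> (forall t, 0 <= V t) -> 0 <= a -> 0 <= b ->
  \sum_t mu t * U t ^+ (p + j) <= a ^+ (p + j) ->
  \sum_t mu t * V t ^+ (p + j) <= b ^+ (p + j) ->
  \sum_t mu t * (U t ^+ p * V t ^+ j) <= a ^+ p * b ^+ j.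
Proof.
move=> U_ge0 V_ge0 a_ge0 b_ge0 hU hV.
case: p hU hV => [|p] hU hV.
  by under eq_bigr do rewrite expr0 mul1r; rewrite expr0 mul1r.
case: j hU hV => [|j] hU hV.
  by under eq_bigr do rewrite expr0 mulr1; rewrite expr0 mulr1 -(addn0 p.+1).
have [a0|a_neq0] := eqVneq a 0.
  by rewrite a0 expr0n /= mul0r mixed_moment_eq0 //; rewrite a0 expr0n in hU.
have [b0|b_neq0] := eqVneq b 0.
  under eq_bigr do rewrite [U _ ^+ _ * _]mulrC.
  by rewrite b0 expr0n /= mulr0 mixed_moment_eq0 // addnC; rewrite b0 expr0n in hV.
have a_gt0 : 0 < a by rewrite lt0r a_neq0.
have b_gt0 : 0 < b by rewrite lt0r b_neq0.
have normalized (W : T -> R) c : 0 < c ->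
    \sum_t mu t * W t ^+ (p.+1 + j.+1) <= c ^+ (p.+1 + j.+1) ->
    \sum_t mu t * (W t / c) ^+ (p.+1 + j.+1) <= 1.
  move=> c_gt0 hW; under eq_bigr do rewrite expr_div_n.
  by rewrite weighted_sum_divr ler_pdivrMr ?mul1r // exprn_gt0.
have := @mixed_moment_le1 (fun t => U t / a) (fun t => V t / b) p.+1 j.+1
  (fun t => divr_ge0 (U_ge0 t) a_ge0) (fun t => divr_ge0 (V_ge0 t) b_ge0)
  (normalized _ _ a_gt0 hU) (normalized _ _ b_gt0 hV).
under eq_bigr do rewrite !expr_div_n mulf_div.
by rewrite weighted_sum_divr ler_pdivrMr ?mul1r // mulr_gt0 // exprn_gt0.
Qed.

Lemma weighted_Minkowski (U V : T -> R) a b k :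
  (forall t, 0 <= U t) -> (forall t, 0 <= V t) -> 0 <= a -> 0 <= b ->
  \sum_t mu t * U t ^+ k <= a ^+ k -> \sum_t mu t * V t ^+ k <= b ^+ k ->
  \sum_t mu t * (U t + V t) ^+ k <= (a + b) ^+ k.
Proof.
move=> U_ge0 V_ge0 a_ge0 b_ge0 hU hV.
under eq_bigr do rewrite exprDn mulr_sumr.
rewrite exchange_big /= exprDn; apply: ler_sum => i _.
under eq_bigr do rewrite mulrnAr.
rewrite sumrMnl lerMn2r; apply/orP; right.
have e : (k - i + i = k)%N by rewrite subnK // -ltnS.
by apply: mixed_moment_le; rewrite ?e.
Qed.

End WeightedMoments.

Section CubeCons.
Variable n : nat.

Definition cube_cons (b : bool) (x : cube n) : cube n.+1 :=
  [ffun i => if unlift ord0 i is Some j then x j else b].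

Definition cube_tail (x : cube n.+1) : cube n := [ffun j => x (lift ord0 j)].

Lemma cube_cons0 b x : cube_cons b x ord0 = b.
Proof. by rewrite ffunE unlift_none. Qed.

Lemma cube_consS b x j : cube_cons b x (lift ord0 j) = x j.
Proof. by rewrite ffunE liftK. Qed.

Lemma cube_consK b x : cube_tail (cube_cons b x) = x.
Proof. by apply/ffunP => j; rewrite ffunE cube_consS. Qed.

Lemma cube_tailK (x : cube n.+1) : cube_cons (x ord0) (cube_tail x) = x.
Proof. by apply/ffunP => i; rewrite ffunE; case: unliftP => [j ->|->] //; rewrite ffunE. Qed.

Lemma Yof_cons b c (x z : cube n) :
  Yof (cube_cons b x) (cube_cons c z) = cube_cons (xorb b c) (Yof x z).
Proof. by apply/ffunP => i; rewrite !ffunE; case: unlift => [j|]; rewrite ?ffunE. Qed.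

Lemma sum_cube_cons (V : nmodType) (F : cube n.+1 -> V) :
  \sum_x F x = \sum_x F (cube_cons true x) + \sum_x F (cube_cons false x).
Proof.
transitivity (\sum_(b : bool) \sum_x F (cube_cons b x)); last by rewrite big_bool.
rewrite pair_big /= (reindex (fun bx : bool * cube n => cube_cons bx.1 bx.2)) /=.
  by apply: eq_bigl => -[].
exists (fun x : cube n.+1 => (x ord0, cube_tail x)) => [[b x] _|x _] /=.
  by rewrite cube_cons0 cube_consK.
by rewrite cube_tailK.
Qed.

End CubeCons.

Lemma sum_cube0 (V : nmodType) (F : cube 0 -> V) (y : cube 0) : \sum_x F x = F y.
Proof. by rewrite (big_pred1 y) // => x /=; apply/esym/eqP/ffunP => -[]. Qed.

Lemma YofC n : commutative (@Yof n).
Proof. by move=> x y; apply/ffunP => i; rewrite !ffunE; case: (x i); case: (y i). Qed.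

Lemma YofKl n (x : cube n) : cancel (Yof x) (Yof x).
Proof. by move=> y; apply/ffunP => i; rewrite !ffunE; case: (x i); case: (y i). Qed.

Lemma YofK n (y : cube n) : cancel (fun x => Yof x y) (fun x => Yof x y).
Proof. by move=> x /=; rewrite YofC [Yof x y]YofC YofKl. Qed.

Lemma Yof_eq n (x y z : cube n) : (Yof x z == y) = (z == Yof x y).
Proof. by apply/eqP/eqP => [<-|->]; rewrite YofKl. Qed.

Lemma sum_sgnb (R : pzRingType) (T : finType) (F : T -> R) (f : T -> bool) :
  \sum_x F x * sgnb (f x) = \sum_x F x - 2 * \sum_(x | f x) F x.
Proof.
rewrite [in RHS](bigID f) /= [LHS](bigID f) /= mulr2n mulrDl mul1r opprD.
rewrite addrACA subrr add0r.
rewrite -sumrN addrC; congr (_ + _); apply: eq_bigr => x fx.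
  by rewrite /sgnb (negbTE fx) mulr1.
by rewrite /sgnb fx mulrN1.
Qed.

Section CubeMean.
Variable R : realFieldType.

Definition cube_mean n (h : cube n -> R) : R := \sum_y (2 ^+ n)^-1 * h y.

Definition head_avg n (h : cube n.+1 -> R) (x : cube n) : R :=
  (h (cube_cons false x) + h (cube_cons true x)) / 2.

Definition head_diff n (h : cube n.+1 -> R) (x : cube n) : R :=
  (h (cube_cons false x) - h (cube_cons true x)) / 2.

Definition hc_form n (c : R) (h : cube n -> R) : R :=
  (1 - c) * cube_mean h ^+ 2 + c * cube_mean (fun x => h x ^+ 2).

Lemma cube_meanD n (F G : cube n -> R) :
  cube_mean (fun x => F x + G x) = cube_mean F + cube_mean G.
Proof. by rewrite /cube_mean -big_split; apply: eq_bigr => x _; rewrite mulrDr. Qed.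

Lemma cube_mean_le n (F G : cube n -> R) :
  (forall x, F x <= G x) -> cube_mean F <= cube_mean G.
Proof. by move=> FG; apply: ler_sum => x _; rewrite ler_wpM2l ?invr_ge0 ?exprn_ge0. Qed.

Lemma cube_mean_ge0 n (F : cube n -> R) : (forall x, 0 <= F x) -> 0 <= cube_mean F.
Proof. by move=> F_ge0; apply: sumr_ge0 => x _; rewrite mulr_ge0 ?invr_ge0 ?exprn_ge0. Qed.

Lemma cube_mean0 (F : cube 0 -> R) y : cube_mean F = F y.
Proof. by rewrite /cube_mean (sum_cube0 _ y) expr0 invr1 mul1r. Qed.

Lemma cube_mean_cons n (F : cube n.+1 -> R) : cube_mean F = cube_mean (head_avg F).
Proof.
rewrite /cube_mean /head_avg sum_cube_cons -big_split /=.
by apply: eq_bigr => x _; rewrite exprS invfM; ring.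
Qed.

Lemma sqr_cube_mean_le n (h : cube n -> R) :
  cube_mean h ^+ 2 <= cube_mean (fun x => h x ^+ 2).
Proof.
elim: n h => [|n IH] h; first by rewrite !(cube_mean0 _ [ffun => false]).
rewrite !cube_mean_cons; apply: le_trans (IH _) _; apply: cube_mean_le => x.
rewrite /head_avg; set a := h _; set b := h _.
by have := sqr_ge0 (a - b); nra.
Qed.

Lemma cube_mean_sqr_head n (h : cube n.+1 -> R) :
  cube_mean (fun x => h x ^+ 2)
    = cube_mean (fun x => head_avg h x ^+ 2) + cube_mean (fun x => head_diff h x ^+ 2).
Proof.
rewrite cube_mean_cons -cube_meanD /cube_mean; apply: eq_bigr => x _.
by rewrite /head_avg /head_diff; congr (_ * _); lra.
Qed.

Lemma hc_form_ge0 n c (h : cube n -> R) : 0 <= c <= 1 -> 0 <= hc_form c h.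
Proof.
case/andP=> c_ge0 c_le1; rewrite addr_ge0 // mulr_ge0 ?subr_ge0 ?sqr_ge0 //.
by apply: cube_mean_ge0 => x; rewrite sqr_ge0.
Qed.

(* The defect is c (1 - c) times the variance of [head_diff h]. *)
Lemma hc_form_head n c (h : cube n.+1 -> R) : 0 <= c <= 1 ->
  hc_form c (head_avg h) + c * hc_form c (head_diff h) <= hc_form c h.
Proof.
case/andP=> c_ge0 c_le1.
rewrite /hc_form [cube_mean h]cube_mean_cons cube_mean_sqr_head.
have := sqr_cube_mean_le (head_diff h).
set m := cube_mean h; set m1 := cube_mean (head_diff h).
set s0 := cube_mean (fun x => head_avg h x ^+ 2).
set s1 := cube_mean (fun x => head_diff h x ^+ 2).
rewrite -subr_ge0 => var_ge0; have c1_ge0 : 0 <= 1 - c by rewrite subr_ge0.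
have := mulr_ge0 (mulr_ge0 c_ge0 c1_ge0) var_ge0.
by clearbody m m1 s0 s1; nra.
Qed.

Lemma cube_mean_cst n (a : R) : cube_mean (fun _ : cube n => a) = a.
Proof.
rewrite /cube_mean sumr_const card_ffun card_bool card_ord -mulrnAl -mulr_natr natrX.
by rewrite mulVf ?mul1r // expf_neq0 // pnatr_eq0.
Qed.

End CubeMean.

Section Noise.
Variables (R : realType) (alpha : R).

Definition probZ n (z : cube n) : R := \prod_(i < n) pZ alpha (z i).

Definition noise n (h : cube n -> R) (y : cube n) : R :=
  \sum_z probZ z * h (Yof y z).

Lemma probZ_cons n b (z : cube n) : probZ (cube_cons b z) = pZ alpha b * probZ z.
Proof.
rewrite /probZ big_ord_recl cube_cons0; congr (_ * _).
by apply: eq_bigr => i _; rewrite cube_consS.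
Qed.

Lemma noise_lincomb n (H F G : cube n -> R) p q :
  (forall x, H x = p * F x + q * G x) ->
  forall y, noise H y = p * noise F y + q * noise G y.
Proof.
move=> eH y; rewrite /noise !mulr_sumr -big_split.
by apply: eq_bigr => z _ /=; rewrite eH; ring.
Qed.

Lemma noise_cons n (h : cube n.+1 -> R) b y :
  noise h (cube_cons b y)
    = noise (head_avg h) y + sgnb b * (1 - 2 * alpha) * noise (head_diff h) y.
Proof.
have split_head : noise h (cube_cons b y)
    = alpha * noise (fun x => h (cube_cons (~~ b) x)) y
      + (1 - alpha) * noise (fun x => h (cube_cons b x)) y.
  rewrite /noise sum_cube_cons !mulr_sumr; congr (_ + _); apply: eq_bigr => z _;
    by rewrite probZ_cons Yof_cons mulrA; case: b.
pose hf x := h (cube_cons false x); pose ht x := h (cube_cons true x).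
have avg : noise (head_avg h) y = 2^-1 * noise hf y + 2^-1 * noise ht y.
  by apply: noise_lincomb => x; rewrite /head_avg mulrC mulrDr.
have dif : noise (head_diff h) y = 2^-1 * noise hf y - 2^-1 * noise ht y.
  by rewrite -mulNr; apply: noise_lincomb => x; rewrite /head_diff mulrC mulrBr mulNr.
by rewrite {}split_head avg dif; case: b; rewrite /sgnb /=; lra.
Qed.

Lemma noise_cube0 (h : cube 0 -> R) y : noise h y = h y.
Proof.
by rewrite /noise (sum_cube0 _ y) /probZ big_ord0 mul1r; congr h; apply/ffunP => -[].
Qed.

Lemma noise_moment_le k n (h : cube n -> R) :
  let c := ((2 * k).-1)%:R * (1 - 2 * alpha) ^+ 2 in c <= 1 ->
  cube_mean (fun y => noise h y ^+ (2 * k)) <= hc_form c h ^+ k.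
Proof.
move=> c c_le1; have c_ge0 : 0 <= c by rewrite mulr_ge0 ?sqr_ge0.
have c01 : 0 <= c <= 1 by rewrite c_ge0 c_le1.
elim: n h => [|n IH] h.
  rewrite /hc_form !(cube_mean0 _ [ffun => false]) noise_cube0 exprM.
  by rewrite -mulrDl subrK mul1r.
set A := noise (head_avg h); set B := noise (head_diff h).
have two_point : cube_mean (fun y => noise h y ^+ (2 * k))
    <= cube_mean (fun y => (A y ^+ 2 + c * B y ^+ 2) ^+ k).
  rewrite cube_mean_cons; apply: cube_mean_le => y.
  rewrite /head_avg !noise_cons /sgnb mulN1r mul1r mulNr -/A -/B /c -mulrA -exprMn.
  exact: two_point_moment_le.
have Minkowski : cube_mean (fun y => (A y ^+ 2 + c * B y ^+ 2) ^+ k)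
    <= (hc_form c (head_avg h) + c * hc_form c (head_diff h)) ^+ k.
  rewrite /cube_mean; apply: weighted_Minkowski => [y|y|y||||].
  - by rewrite invr_ge0 exprn_ge0.
  - exact: sqr_ge0.
  - by rewrite mulr_ge0 ?sqr_ge0.
  - exact: hc_form_ge0.
  - by rewrite mulr_ge0 ?hc_form_ge0.
  - by under eq_bigr do rewrite -exprM; exact: IH.
  have -> : \sum_y (2 ^+ n)^-1 * (c * B y ^+ 2) ^+ k
            = c ^+ k * cube_mean (fun y => noise (head_diff h) y ^+ (2 * k)).
    by rewrite mulr_sumr; apply: eq_bigr => y _; rewrite exprMn -exprM mulrCA.
  by rewrite [X in _ <= X]exprMn; apply: ler_wpM2l; rewrite ?exprn_ge0 ?IH.
apply: (le_trans two_point); apply: (le_trans Minkowski).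
apply: lerXn2r; last exact: hc_form_head.
  by rewrite nnegrE addr_ge0 ?hc_form_ge0 // mulr_ge0 ?hc_form_ge0.
by rewrite nnegrE hc_form_ge0.
Qed.

Lemma sum_probZ n : \sum_(z : cube n) probZ z = 1.
Proof.
rewrite /probZ -(bigA_distr_bigA (fun (i : 'I_n) b => pZ alpha b)) /=.
by apply: big1 => i _; rewrite big_bool /pZ /= addrC subrK.
Qed.

Lemma sum_probZ_Yof n (y : cube n) : \sum_x probZ (Yof x y) = 1.
Proof. by rewrite -(sum_probZ n) [RHS](reindex_inj (can_inj (YofK y))). Qed.

Lemma sum_Yof_eq n (x y : cube n) (F : cube n -> R) :
  \sum_(z | Yof x z == y) F z = F (Yof x y).
Proof. by rewrite (big_pred1 (Yof x y)) // => z; rewrite /= Yof_eq. Qed.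

Lemma PrY_eq n (y : cube n) : PrY alpha y = (2 ^+ n)^-1.
Proof.
rewrite /PrY; under eq_bigr do rewrite sum_Yof_eq /prXZ -/(probZ _).
by rewrite -mulr_sumr sum_probZ_Yof mulr1.
Qed.

Lemma Pcond_eq n (f : cube n -> bool) y :
  Pcond alpha f y = \sum_(x | f x) probZ (Yof x y).
Proof.
rewrite /Pcond PrY_eq; under eq_bigr do rewrite sum_Yof_eq /prXZ -/(probZ _).
by rewrite -mulr_sumr mulrC mulKf // invr_eq0 expf_neq0 // pnatr_eq0.
Qed.

Lemma noise_sgnb n (f : cube n -> bool) y :
  noise (fun x => sgnb (f x)) y = 1 - 2 * Pcond alpha f y.
Proof.
rewrite Pcond_eq /noise (reindex_inj (can_inj (YofK y))) /=.
under eq_bigr => x _ do rewrite [Yof x y in X in f X]YofC YofKl.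
by rewrite sum_sgnb sum_probZ_Yof.
Qed.

Lemma cube_mean_sgnb n (f : cube n -> bool) :
  cube_mean (fun x => sgnb (f x)) = 1 - 2 * Pr_f_neg alpha f.
Proof.
rewrite /cube_mean sum_sgnb /Pr_f_neg; congr (_ - 2 * _).
  by rewrite -[RHS](cube_mean_cst n); apply: eq_bigr => x _; rewrite mulr1.
by apply: eq_bigr => x _; rewrite /prXZ -mulr_sumr sum_probZ mulr1.
Qed.
End Noise.

Theorem lemma1 (R : realType) (alpha : R) (n k : nat)
  (ha0 : 0 <= alpha) (ha1 : alpha <= 2^-1) (hk : (1 <= k)%N)
  (hcond : (1 - 2 * alpha) * Num.sqrt ((2 * k).-1)%:R <= 1)
  (f : cube n -> bool) (hf : @balanced R n alpha f) :
  @EY R n alpha (fun y => (1 - 2 * @Pcond R n alpha f y) ^+ (2 * k))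
    <= ((2 * k).-1)%:R ^+ k * (1 - 2 * alpha) ^+ (2 * k).
Proof.
pose g x := sgnb (f x) : R.
pose c := ((2 * k).-1)%:R * (1 - 2 * alpha) ^+ 2.
have c_le1 : c <= 1.
  have rho_ge0 : 0 <= 1 - 2 * alpha by lra.
  have := lerXn2r 2 _ _ hcond; rewrite !nnegrE mulr_ge0 ?sqrtr_ge0 // expr1n.
  by rewrite exprMn sqr_sqrtr // mulrC; apply.
have EY_noise : EY alpha (fun y => (1 - 2 * Pcond alpha f y) ^+ (2 * k))
    = cube_mean (fun y => noise alpha g y ^+ (2 * k)).
  by apply: eq_bigr => y _; rewrite PrY_eq noise_sgnb.
have hc_g : hc_form c g = c.
  have mean_sqr_g : cube_mean (fun x => g x ^+ 2) = 1.
    rewrite -[RHS](cube_mean_cst n); apply: eq_bigr => x _.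
    by rewrite /g /sgnb; case: (f x); rewrite ?sqrrN expr1n.
  rewrite /hc_form (cube_mean_sgnb alpha) hf mulfV ?pnatr_eq0 // subrr expr0n.
  by rewrite mean_sqr_g mulr0 add0r mulr1.
rewrite EY_noise; apply: le_trans (noise_moment_le g c_le1) _.
by rewrite hc_g /c exprMn -exprM mulnC.
Qed.
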